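(* Let $G$ be a finite solvable group, $N$ an abelian normal subgroup of $G$, $a\in G$, $C=\mathbf{C}_G(a)$, and $C_N=\{g\in G\mid [a,g]\in N\}$ (a subgroup of $G$ containing $C$). Then $$\operatorname{dl}\big(C_N/\operatorname{core}_{C_N}(C)\big)\le \operatorname{dl}\big(C_N/(C_N\cap\mathbf{C}_G(N))\big)+1.$$ If in addition $N$ is cyclic, then $\operatorname{dl}\big(C_N/\operatorname{core}_{C_N}(C)\big)\le 2$.
   Context: $[x,g]=x^{-1}g^{-1}xg$. $\mathbf{C}_G(a)$ is the centralizer of $a$ and $\mathbf{C}_G(N)$ the centralizer of the subgroup $N$. For a subgroup $K$ of a group $L$, $\operatorname{core}_L(K)=\bigcap_{l\in L}l^{-1}Kl$. $\operatorname{dl}$ denotes derived length. *)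

From mathcomp Require Import all_boot all_fingroup all_solvable.
Set Implicit Arguments. Unset Strict Implicit. Unset Printing Implicit Defensive.
Local Open Scope group_scope.

(* Derived length of a finite group A: the least n with A^`(n) = 1.
   (For a finite solvable group such n exists and is <= #|A|; the search
   range iota 0 #|A|.+1 therefore always finds it.) *)
Definition dl (gT : finGroupType) (A : {set gT}) : nat :=
  find (fun n => A^`(n) == 1) (iota 0 #|A|.+1).

From mathcomp Require Import all_boot all_fingroup all_solvable.
Set Implicit Arguments.
Unset Strict Implicit.
Unset Printing Implicit Defensive.
Local Open Scope group_scope.

(* For x in D := C_N :&: C_G(N) we have a ^ x = a * [a, x] with [a, x] in the
   abelian group N, and these factors are fixed by conjugation under D; hence
   conjugations of a by elements of D commute, so D' centralizes a. As D' is
   characteristic in D <| C_N, it lies in the core of C_G[a], which costs at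
   most one step of derived length. If N is cyclic, Aut N is abelian, so C_N'
   centralizes N and C_N / D is abelian. *)

Lemma dl_leq (gT : finGroupType) (A : {set gT}) n : A^`(n) = 1 -> (dl A <= n)%N.
Proof.
move=> An1; rewrite /dl leqNgt; apply/negP => lt_n_dl.
have lt_n_size : (n < #|A|.+1)%N.
  by rewrite -(size_iota 0 #|A|.+1); apply: leq_trans lt_n_dl (find_size _ _).
by have := before_find 0%N lt_n_dl; rewrite nth_iota // add0n An1 eqxx.
Qed.

Lemma card_der_sol (gT : finGroupType) (G : {group gT}) n :
  solvable G -> G^`(n) != 1 -> (#|G^`(n)| + n <= #|G|)%N.
Proof.
move=> solG; elim: n => [|n IHn] ntGn; first by rewrite addn0.
have ntGn' : G^`(n) != 1.
  by apply: contraNneq ntGn; rewrite dergSn => ->; rewrite commG1.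
apply: leq_trans (IHn ntGn'); rewrite addnS ltn_add2r.
exact/proper_card/(sol_der1_proper solG (der_sub n G)).
Qed.

Lemma sol_der_card (gT : finGroupType) (G : {group gT}) : solvable G -> G^`(#|G|) = 1.
Proof.
move=> solG; apply/eqP/negPn/negP => /(card_der_sol solG).
by rewrite -[X in (_ <= X)%N]add0n leq_add2r leqNgt cardG_gt0.
Qed.

Lemma derg_dl (gT : finGroupType) (G : {group gT}) : solvable G -> G^`(dl G) = 1.
Proof.
move=> solG.
have has_trivg : has (fun n => G^`(n) == 1) (iota 0 #|G|.+1).
  apply/hasP; exists #|G|; last by rewrite sol_der_card.
  by rewrite mem_iota add0n ltnS leqnn.
have := nth_find 0%N has_trivg; rewrite /dl nth_iota ?add0n => [/eqP //|].
by rewrite -{2}(size_iota 0 #|G|.+1) -has_find.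
Qed.

Lemma dl_quotient_leq (gT : finGroupType) (G H : {group gT}) n :
  G \subset 'N(H) -> G^`(n) \subset H -> (dl (G / H) <= n)%N.
Proof.
move=> nHG sGnH; apply: dl_leq; rewrite -quotient_der //.
by apply/trivgP; rewrite quotient_sub1 // (subset_trans (der_sub n G)).
Qed.

Lemma der_dl_quotient (gT : finGroupType) (G H : {group gT}) :
  solvable G -> G \subset 'N(H) -> G^`(dl (G / H)) \subset H.
Proof.
move=> solG nHG; rewrite -quotient_sub1 ?(subset_trans (der_sub _ G)) //.
by rewrite quotient_der // derg_dl ?quotient_sol.
Qed.

Lemma dl_quotient_der1 (gT : finGroupType) (G H K : {group gT}) :
  solvable G -> G \subset 'N(H) -> G \subset 'N(K) -> H^`(1) \subset K ->
  (dl (G / K) <= dl (G / H) + 1)%N.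
Proof.
move=> solG nHG nKG sH'K; apply: dl_quotient_leq => //.
rewrite addn1 dergSn; apply: subset_trans sH'K.
by have sGnH := der_dl_quotient solG nHG; rewrite derg1 commgSS.
Qed.

Lemma der1_sub_cent_cyclic (gT : finGroupType) (G N : {group gT}) :
  G \subset 'N(N) -> cyclic N -> G^`(1) \subset 'C(N).
Proof.
move=> nNG cycN; rewrite -ker_conj_aut ker_trivg_morphim.
rewrite (subset_trans (der_sub 1 G)) //= morphim_der // derg1.
apply/trivgP/commG1P.
exact: abelianS (Aut_conj_aut _ _) (Aut_cyclic_abelian cycN).
Qed.

Section CentralizingCommutators.

Variables (gT : finGroupType) (N H : {group gT}) (a : gT).
Hypotheses (abN : abelian N) (cNH : H \subset 'C(N)).
Hypothesis commNH : {in H, forall x, [~ a, x] \in N}.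

(* Both sides equal a times the two commuting elements [a, u] and [a, v] of N. *)
Lemma conjg_swap : {in H &, forall u v, a ^ (u * v) = a ^ (v * u)}.
Proof.
have conjE u : u \in H -> a ^ u = a * [~ a, u] by rewrite conjg_mulR.
have fixN u v : u \in H -> v \in H -> [~ a, u] ^ v = [~ a, u].
  move=> Hu Hv; apply/conjg_fixP/commgP/commute_sym.
  exact: (centP (subsetP cNH v Hv)) _ (commNH Hu).
move=> u v Hu Hv; rewrite !conjgM (conjE u) // (conjE v) // !(conjMg a) !fixN //.
rewrite [a ^ v]conjE // [a ^ u]conjE // -[LHS]mulgA -[RHS]mulgA.
by rewrite (centsP abN _ (commNH Hv) _ (commNH Hu)).
Qed.

Lemma der1_sub_cent1 : H^`(1) \subset 'C[a].
Proof.
rewrite derg1 gen_subG; apply/subsetP => _ /imset2P[x y Hx Hy ->].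
apply/cent1P/commute_sym/commgP/conjg_fixP.
have swap := conjg_swap (groupVr Hx) (groupVr Hy).
rewrite /commg !conjgM -(conjgM _ x^-1) swap -!conjgM.
by rewrite -mulgA mulKg mulVg conjg1.
Qed.

End CentralizingCommutators.

Theorem lemma4p4 (gT : finGroupType) (G N CN : {group gT}) (a : gT) :
  solvable G -> N <| G -> abelian N -> a \in G ->
  CN :=: [set g in G | [~ a, g] \in N] ->
  (dl (CN / gcore 'C_G[a] CN) <= dl (CN / (CN :&: 'C_G(N))) + 1)%N /\
  (cyclic N -> (dl (CN / gcore 'C_G[a] CN) <= 2)%N).
Proof.
move=> solG /andP[_ nNG] abN _ defCN.
have memCN x : x \in CN -> x \in G /\ [~ a, x] \in N.
  by rewrite defCN inE => /andP[].
have sCNG : CN \subset G by apply/subsetP => x /memCN[].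
set D := (CN :&: 'C_G(N))%G.
have nDCN : CN \subset 'N(D).
  by rewrite normsI ?normG // (subset_trans sCNG) ?normsI ?normG ?norms_cent.
have sD'C : D^`(1) \subset 'C_G[a].
  have sDG : D \subset G := subset_trans (subsetIl _ _) sCNG.
  have cND : D \subset 'C(N) := subset_trans (subsetIr _ _) (subsetIr _ _).
  rewrite subsetI (subset_trans (der_sub 1 D) sDG) (der1_sub_cent1 abN cND) //.
  by move=> x /setIP[/memCN[]].
have sD'K : D^`(1) \subset gcore 'C_G[a] CN.
  by rewrite sub_gcore //; apply: char_norm_trans (der_char 1 D) nDCN.
have solCN := solvableS sCNG solG.
have dl_le := dl_quotient_der1 solCN nDCN (gcore_norm _ _) sD'K.
split=> // cycN; apply: leq_trans dl_le _; rewrite -[2%N]/(1 + 1)%N leq_add2r.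
apply: dl_quotient_leq nDCN _.
rewrite subsetI der_sub subsetI (subset_trans (der_sub 1 CN)) //=.
exact: der1_sub_cent_cyclic (subset_trans sCNG nNG) cycN.
Qed.
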